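(* Let $g$ solve system (S3) with initial data $h_{ii}>0$, $h_{11}\le h_{22}\le h_{33}$, and suppose $h\in D_{L_0}$, i.e. the solution of the planar system (P) starting at $(h_{00}^{1/3}h_{22},h_{00}^{1/3}h_{33})$ converges to $P_0$ (the point where $a=b=c$). Then the solution of (S3) exists for all $t\ge 0$, $g_{00}$ does not converge to $0$ (it converges to a positive limit), and $g_{11},g_{22},g_{33}$ all converge to the same positive value.
   Context: Let $\det h = h_{00}h_{11}h_{22}h_{33}$, $\beta=\frac{1}{6(\det h)^2}$, $p(x,y,z) = x^4 - x^3(y+z) + x^2yz + x(-y^3+y^2z+yz^2-z^3) + y^4 - y^3z - yz^3 + z^4$, $q(x,y,z) = 5x^4 - 3x^3(y+z) + x^2yz + x(y^3-y^2z-yz^2+z^3) - 3y^4 + 3y^3z + 3yz^3 - 3z^4$, $r(x,y,z) = \tfrac12(p+3q)(x,y,z) = 8x^4-5x^3(y+z)+2x^2yz+x(y^3-y^2z-yz^2+z^3)-4y^4+4y^3z+4yz^3-4z^4$. System (S3): $\dot g_{00} = -\beta\,p(g_{11},g_{22},g_{33})\,g_{00}^3$, $\dot g_{11} = -\beta\,q(g_{11},g_{22},g_{33})\,g_{00}^2g_{11}$, $\dot g_{22} = -\beta\,q(g_{22},g_{33},g_{11})\,g_{00}^2g_{22}$, $\dot g_{33} = -\beta\,q(g_{33},g_{11},g_{22})\,g_{00}^2g_{33}$, $g_{ii}(0)=h_{ii}$ (Bach flow on $\mathbb{R}\times\mathbb{S}^3$ in a diagonalizing frame; $g_{00}g_{11}g_{22}g_{33}=\det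 h$ is preserved). Set $a=g_{00}^{1/3}g_{11}$, $b=g_{00}^{1/3}g_{22}$, $c=g_{00}^{1/3}g_{33}$, so $abc=\det h$. Under (S3), $(b,c)$ follows, up to a time reparametrization, the planar system (P): $\dot b=-\tfrac23 r(b,a,c)\,b$, $\dot c=-\tfrac23 r(c,a,b)\,c$ with $a=\det h/(bc)$, on the region $a\le b\le c$. $P_0$ is the point $b=c=(\det h)^{1/3}$; $D_{L_0}$ is the set of initial metrics whose (P)-trajectory converges to $P_0$. *)

From Stdlib Require Import Reals Lra.
Open Scope R_scope.

Definition detH (h0 h1 h2 h3 : R) : R := h0 * h1 * h2 * h3.
Definition beta (h0 h1 h2 h3 : R) : R := 1 / (6 * (detH h0 h1 h2 h3) ^ 2).

Definition pp (x y z : R) : R :=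
  x ^ 4 - x ^ 3 * (y + z) + x ^ 2 * y * z
  + x * (- y ^ 3 + y ^ 2 * z + y * z ^ 2 - z ^ 3)
  + y ^ 4 - y ^ 3 * z - y * z ^ 3 + z ^ 4.

Definition qq (x y z : R) : R :=
  5 * x ^ 4 - 3 * x ^ 3 * (y + z) + x ^ 2 * y * z
  + x * (y ^ 3 - y ^ 2 * z - y * z ^ 2 + z ^ 3)
  - 3 * y ^ 4 + 3 * y ^ 3 * z + 3 * y * z ^ 3 - 3 * z ^ 4.

Definition rr (x y z : R) : R := (1 / 2) * (pp x y z + 3 * qq x y z).

Definition conv_infty (f : R -> R) (l : R) : Prop :=
  forall eps, 0 < eps -> exists T, forall t, T <= t -> Rabs (f t - l) < eps.

Definition right_cont0 (f : R -> R) : Prop :=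
  forall eps, 0 < eps -> exists delta, 0 < delta /\
    forall t, 0 <= t < delta -> Rabs (f t - f 0) < eps.

Definition S3_global_solution (h0 h1 h2 h3 : R) (g0 g1 g2 g3 : R -> R) : Prop :=
  let be := beta h0 h1 h2 h3 in
  g0 0 = h0 /\ g1 0 = h1 /\ g2 0 = h2 /\ g3 0 = h3 /\
  right_cont0 g0 /\ right_cont0 g1 /\ right_cont0 g2 /\ right_cont0 g3 /\
  (forall t, 0 < t ->
     derivable_pt_lim g0 t (- be * pp (g1 t) (g2 t) (g3 t) * (g0 t) ^ 3) /\
     derivable_pt_lim g1 t (- be * qq (g1 t) (g2 t) (g3 t) * (g0 t) ^ 2 * g1 t) /\
     derivable_pt_lim g2 t (- be * qq (g2 t) (g3 t) (g1 t) * (g0 t) ^ 2 * g2 t) /\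
     derivable_pt_lim g3 t (- be * qq (g3 t) (g1 t) (g2 t) * (g0 t) ^ 2 * g3 t)).

(* (b,c) solves the planar system (P) on [0,+infinity), with a = D/(bc),
   D = det h, starting at (b0,c0); b,c stay positive so that a is defined. *)
Definition P_global_solution (D b0 c0 : R) (b c : R -> R) : Prop :=
  b 0 = b0 /\ c 0 = c0 /\ right_cont0 b /\ right_cont0 c /\
  (forall t, 0 <= t -> 0 < b t /\ 0 < c t) /\
  (forall t, 0 < t ->
     derivable_pt_lim b t
       (- (2 / 3) * rr (b t) (D / (b t * c t)) (c t) * b t) /\
     derivable_pt_lim c t
       (- (2 / 3) * rr (c t) (D / (b t * c t)) (b t) * c t)).

Definition in_DL0 (h0 h1 h2 h3 : R) : Prop :=
  let D := detH h0 h1 h2 h3 in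
  exists b c : R -> R,
    P_global_solution D (Rpower h0 (1/3) * h2) (Rpower h0 (1/3) * h3) b c /\
    conv_infty b (Rpower D (1/3)) /\ conv_infty c (Rpower D (1/3)).

From Stdlib Require Import Reals Lra Psatz ClassicalEpsilon Ranalysis5.
From Coquelicot Require Import Coquelicot.
Open Scope R_scope.

(* Along (S3) put [u = g00^(1/3)] and [(a, b, c) = u (g11, g22, g33)], so that
   [a b c = det h].  After the time change [ds = beta u^2 dt], [(b, c)] solves
   the planar system (P) and [u' = - u p(a, b, c) / 3], where [p] is Schur's
   quartic form, which is nonnegative.  Conversely, the given (P)-trajectory and
   [u = h00^(1/3) exp (- int p / 3)] rebuild a global solution of (S3), and
   every solution equals it because the field of (S3) is polynomial, hence
   locally Lipschitz.
   Along (P), [p(a, b, c)] decreases at rate [(2/9) (r_a^2 + r_b^2 + r_c^2)],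
   and near the diagonal [p <= C (r_a^2 + r_b^2 + r_c^2)].  As the trajectory
   converges to [P_0], [int p] is therefore finite: [u], hence [g00], has a
   positive limit, and [g_ii = (a, b, c) / u] all tend to [(det h)^(1/3) / lim u]. *)

Lemma continuity_pt_eps f t : continuity_pt f t <->
  forall eps, 0 < eps -> exists al, 0 < al /\
    forall x, Rabs (x - t) < al -> Rabs (f x - f t) < eps.
Proof.
  split.
  - intros H eps Heps. destruct (H eps Heps) as [al [Hal Hf]]. exists al. split; [lra|].
    intros x Hx. destruct (Req_dec x t) as [->|Hxt].
    + rewrite Rminus_diag, Rabs_R0. lra.
    + apply Hf. repeat split; auto.
  - intros H eps Heps. destruct (H eps Heps) as [al [Hal Hf]]. exists al. split; [lra|].
    intros x [_ Hx]. apply Hf. exact Hx.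
Qed.

Lemma derivable_pt_lim_continuity_pt f t l : derivable_pt_lim f t l -> continuity_pt f t.
Proof. intro H. apply derivable_continuous_pt. exists l. exact H. Qed.

Lemma is_derive_eq_Derive f t l : is_derive f t l -> Derive (fun x => f x) t = l.
Proof. apply is_derive_unique. Qed.

Lemma Rpower_third_cube x : 0 < x -> Rpower x (1/3) ^ 3 = x.
Proof.
  intro Hx. rewrite <- Rpower_pow by apply exp_pos. rewrite Rpower_mult.
  replace (1/3 * INR 3) with 1 by (simpl; field). apply Rpower_1, Hx.
Qed.

Lemma continuity_pt_pow (f : R -> R) n x :
  continuity_pt f x -> continuity_pt (fun t => f t ^ n) x.
Proof.
  intro H; induction n as [|n IH]; simpl.
  - apply (continuity_pt_const (fun _ => 1)). intros ? ?; reflexivity.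
  - apply (continuity_pt_mult f (fun t => f t ^ n)); auto.
Qed.

Ltac continuity_tac :=
  repeat match goal with
  | H : forall t, continuity_pt ?F t |- continuity_pt ?F _ => apply H
  | H : continuity_pt ?F ?x |- continuity_pt ?F ?x => apply H
  | |- continuity_pt (fun _ => ?c) _ =>
      apply (continuity_pt_const (fun _ => c)); intros ? ?; reflexivity
  | |- continuity_pt (fun t => @?A t + @?B t) _ => apply (continuity_pt_plus A B)
  | |- continuity_pt (fun t => @?A t - @?B t) _ => apply (continuity_pt_minus A B)
  | |- continuity_pt (fun t => @?A t * @?B t) _ => apply (continuity_pt_mult A B)
  | |- continuity_pt (fun t => @?A t / @?B t) _ => apply (continuity_pt_div A B)
  | |- continuity_pt (fun t => - @?A t) _ => apply (continuity_pt_opp A)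
  | |- continuity_pt (fun t => @?A t ^ ?n) _ => apply (continuity_pt_pow A n)
  | H : forall t, continuity_pt ?f t |- continuity_pt (fun t => ?f t) _ => apply H
  end.

Lemma right_cont0_continuity_pt f : continuity_pt f 0 -> right_cont0 f.
Proof.
  intros H eps Heps. destruct (proj1 (continuity_pt_eps f 0) H eps Heps) as [al [Hal Hf]].
  exists al. split; auto. intros t Ht. apply Hf. rewrite Rminus_0_r, Rabs_pos_eq; lra.
Qed.

Definition ext0 (f : R -> R) (t : R) : R := f (Rmax 0 t).

Lemma ext0_pos f t : 0 <= t -> ext0 f t = f t.
Proof. intro; unfold ext0; rewrite Rmax_right; lra. Qed.

Lemma ext0_continuity_pt f : right_cont0 f ->
  (forall t, 0 < t -> continuity_pt f t) -> forall t, continuity_pt (ext0 f) t.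
Proof.
  intros H0 Hc t. apply continuity_pt_eps. unfold ext0. intros eps Heps.
  destruct (Rtotal_order t 0) as [Ht|[->|Ht]].
  - exists (- t). split; [lra|]. intros x Hx. apply Rabs_def2 in Hx.
    rewrite !Rmax_left by lra. rewrite Rminus_diag, Rabs_R0. lra.
  - destruct (H0 eps Heps) as [de [Hde Hf]]. exists de. split; [lra|].
    intros x Hx. rewrite Rminus_0_r in Hx. apply Rabs_def2 in Hx.
    rewrite (Rmax_left 0 0) by lra. destruct (Rle_dec 0 x).
    + rewrite Rmax_right by lra. apply Hf. lra.
    + rewrite Rmax_left by lra. rewrite Rminus_diag, Rabs_R0. lra.
  - destruct (proj1 (continuity_pt_eps f t) (Hc t Ht) eps Heps) as [al [Hal Hf]].
    exists (Rmin al t). split; [apply Rmin_pos; lra|]. intros x Hx.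
    pose proof (Rmin_l al t). pose proof (Rmin_r al t).
    assert (0 < x) by (apply Rabs_def2 in Hx; lra).
    rewrite !Rmax_right by lra. apply Hf. lra.
Qed.

Lemma ext0_derivable_pt_lim f t l : 0 < t -> derivable_pt_lim f t l ->
  derivable_pt_lim (ext0 f) t l.
Proof.
  intros Ht H. apply is_derive_Reals. apply is_derive_Reals in H.
  apply (is_derive_ext_loc f); [|exact H].
  exists (mkposreal t Ht). intros s Hs. apply Rabs_def2 in Hs.
  unfold minus, plus, opp in Hs; simpl in Hs.
  symmetry. apply ext0_pos. lra.
Qed.

Lemma nonincreasing_of_derive (f df : R -> R) a b : a <= b ->
  (forall t, a <= t <= b -> derivable_pt_lim f t (df t)) ->
  (forall t, a <= t <= b -> df t <= 0) -> f b <= f a.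
Proof.
  intros Hab Hd Hs. destruct (Req_dec a b) as [->|Hne]; [lra|].
  destruct (MVT_cor2 f df a b) as [c [Hc1 Hc2]]; [lra|intros; apply Hd; lra|].
  assert (df c <= 0) by (apply Hs; lra). nra.
Qed.

Lemma gronwall_zero (e de : R -> R) K T : 0 < T -> continuity_pt e 0 -> e 0 = 0 ->
  (forall t, 0 < t <= T -> derivable_pt_lim e t (de t) /\ de t <= K * e t) -> e T <= 0.
Proof.
  intros HT He0c He0 Hd.
  (* [e t exp (- K t)] is nonincreasing on [(0, T]] and tends to [0] at [0]. *)
  set (f := fun t => e t * exp (- K * t)).
  assert (Hmon : forall eps, 0 < eps <= T -> f T <= f eps).
  { intros eps Heps.
    apply (nonincreasing_of_derive f (fun t => (de t - K * e t) * exp (- K * t))); [lra| |].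
    - intros t Ht. destruct (Hd t ltac:(lra)) as [H1 _]. apply is_derive_Reals in H1.
      apply is_derive_Reals. unfold f. auto_derive; [eexists; eassumption|].
      rewrite (is_derive_eq_Derive e t (de t) H1). ring.
    - intros t Ht. destruct (Hd t ltac:(lra)) as [_ H2].
      pose proof (exp_pos (- K * t)). nra. }
  assert (Hf0 : continuity_pt f 0).
  { unfold f. apply (continuity_pt_mult e (fun t => exp (- K * t))); [exact He0c|].
    apply (derivable_pt_lim_continuity_pt _ 0 (exp (- K * 0) * (- K))).
    apply is_derive_Reals. auto_derive; [exact I|ring]. }
  apply Rnot_lt_le. intro HeT.
  assert (HfT : 0 < f T) by (unfold f; pose proof (exp_pos (- K * T)); nra).
  destruct (proj1 (continuity_pt_eps f 0) Hf0 (f T) HfT) as [al [Hal Hsmall]].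
  set (eps := Rmin (al / 2) T).
  assert (Heps : 0 < eps <= T) by (unfold eps; split; [apply Rmin_pos|apply Rmin_r]; lra).
  assert (eps <= al / 2) by apply Rmin_l.
  specialize (Hmon eps Heps).
  assert (Habs : Rabs (f eps - f 0) < f T) by (apply Hsmall; rewrite Rminus_0_r, Rabs_pos_eq; lra).
  unfold f at 2 in Habs. rewrite He0, Rmult_0_l, Rminus_0_r in Habs.
  apply Rabs_def2 in Habs. lra.
Qed.

Lemma conv_infty_is_lim f l : conv_infty f l <-> is_lim f p_infty l.
Proof.
  assert (Hball : forall x y e, ball x e y <-> Rabs (y - x) < e) by reflexivity.
  unfold is_lim. split.
  - intro H. apply filterlim_locally. intro eps.
    destruct (H eps (cond_pos eps)) as [T HT]. exists T. intros x Hx.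
    apply Hball, HT. lra.
  - intros H eps Heps.
    destruct (proj1 (filterlim_locally _ _) H (mkposreal eps Heps)) as [M HM].
    exists (M + 1). intros t Ht. apply Hball, HM. lra.
Qed.

Lemma conv_infty_const l : conv_infty (fun _ => l) l.
Proof. intros eps Heps. exists 0. intros. rewrite Rminus_diag, Rabs_R0. auto. Qed.

Lemma conv_infty_eventually_eq f g l :
  (exists T, forall t, T <= t -> f t = g t) -> conv_infty f l -> conv_infty g l.
Proof.
  intros [T0 HT0] Hf eps Heps. destruct (Hf eps Heps) as [T HT]. exists (Rmax T T0).
  intros t Ht. pose proof (Rmax_l T T0). pose proof (Rmax_r T T0).
  rewrite <- HT0 by lra. apply HT. lra.
Qed.

Lemma conv_infty_agree_on_nonneg f g l :
  (forall t, 0 <= t -> f t = g t) -> conv_infty f l -> conv_infty g l.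
Proof. intro H. apply conv_infty_eventually_eq. exists 0. exact H. Qed.

Lemma conv_infty_continuous f l F : conv_infty f l -> continuity_pt F l ->
  conv_infty (fun t => F (f t)) (F l).
Proof.
  intros Hf HF eps Heps.
  destruct (proj1 (continuity_pt_eps F l) HF eps Heps) as [al [Hal HF']].
  destruct (Hf al Hal) as [T HT]. exists T. intros t Ht. apply HF', HT, Ht.
Qed.

Lemma conv_infty_comp f g l : conv_infty f l ->
  (forall M, exists T, forall t, T <= t -> M <= g t) -> conv_infty (fun t => f (g t)) l.
Proof.
  intros Hf Hg eps Heps. destruct (Hf eps Heps) as [T HT]. destruct (Hg T) as [T' HT'].
  exists T'. intros t Ht. apply HT, HT', Ht.
Qed.

Lemma conv_infty_mult f g l m : conv_infty f l -> conv_infty g m ->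
  conv_infty (fun t => f t * g t) (l * m).
Proof.
  rewrite !conv_infty_is_lim. intros Hf Hg. apply (is_lim_mult f g p_infty l m Hf Hg). exact I.
Qed.

Lemma conv_infty_div f g l m : m <> 0 -> conv_infty f l -> conv_infty g m ->
  conv_infty (fun t => f t / g t) (l / m).
Proof.
  rewrite !conv_infty_is_lim. intros Hm Hf Hg.
  apply (is_lim_div f g p_infty l m Hf Hg); [congruence|exact I].
Qed.

Lemma conv_infty_pow f l n : conv_infty f l -> conv_infty (fun t => f t ^ n) (l ^ n).
Proof.
  intro H. apply (conv_infty_continuous f l (fun x => x ^ n) H).
  apply derivable_continuous_pt, derivable_pt_pow.
Qed.

Lemma conv_infty_nondecreasing (f : R -> R) B :
  (forall x y, 0 <= x <= y -> f x <= f y) -> (forall x, 0 <= x -> f x <= B) ->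
  exists L, conv_infty f L.
Proof.
  intros Hm Hb.
  set (E := fun y => exists x, 0 <= x /\ y = f x).
  destruct (completeness E) as [L [HL1 HL2]].
  { exists B. intros y [x [Hx ->]]. auto. }
  { exists (f 0), 0. split; lra. }
  exists L. intros eps Heps.
  assert (Hx0 : exists x, 0 <= x /\ L - eps < f x).
  { apply NNPP. intro Hn. enough (L <= L - eps) by lra. apply HL2.
    intros y [x [Hx ->]]. apply Rnot_lt_le. intro. apply Hn. exists x. auto. }
  destruct Hx0 as [x0 [Hx0 Hfx0]]. exists x0. intros t Ht.
  assert (f x0 <= f t) by (apply Hm; lra).
  assert (f t <= L) by (apply HL1; exists t; split; [lra|auto]).
  rewrite Rabs_left1; lra.
Qed.

Lemma is_derive_RInt_0 (f : R -> R) : (forall s, continuity_pt f s) ->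
  forall s, is_derive (fun x => RInt f 0 x) s (f s).
Proof.
  intros Hf s. apply (is_derive_RInt f (fun x => RInt f 0 x) 0 s).
  - apply filter_forall. intro x. apply (RInt_correct (V := R_CompleteNormedModule)).
    apply (ex_RInt_continuous (V := R_CompleteNormedModule)).
    intros z _. apply continuity_pt_filterlim, Hf.
  - apply continuity_pt_filterlim, Hf.
Qed.

Lemma growth_of_derive_lower_bound (T k : R -> R) m :
  (forall s, derivable_pt_lim T s (k s)) -> (forall s, m <= k s) ->
  forall x y, x <= y -> m * (y - x) <= T y - T x.
Proof.
  intros HT Hk x y Hxy. cut (m * y - T y <= m * x - T x); [lra|].
  apply (nonincreasing_of_derive (fun s => m * s - T s) (fun s => m - k s) x y Hxy).
  - intros t _. apply is_derive_Reals. auto_derive.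
    + exists (k t). apply is_derive_Reals, HT.
    + rewrite (is_derive_eq_Derive T t (k t)) by (apply is_derive_Reals, HT). ring.
  - intros t _. specialize (Hk t). lra.
Qed.

Lemma surjective_of_linear_growth (T : R -> R) m : 0 < m -> (forall s, continuity_pt T s) ->
  (forall x y, x <= y -> m * (y - x) <= T y - T x) -> forall t, exists s, T s = t.
Proof.
  intros Hm Hc Hgrow t. set (r := (Rabs t + Rabs (T 0) + 1) / m).
  assert (Hr : m * r = Rabs t + Rabs (T 0) + 1) by (unfold r; field; lra).
  assert (0 < r)
    by (unfold r; pose proof (Rabs_pos t); pose proof (Rabs_pos (T 0)); apply Rdiv_lt_0_compat; lra).
  pose proof (Hgrow (- r) 0 ltac:(lra)). pose proof (Hgrow 0 r ltac:(lra)).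
  pose proof (Rle_abs t). pose proof (Rle_abs (- t)). pose proof (Rle_abs (T 0)).
  pose proof (Rle_abs (- T 0)). rewrite !Rabs_Ropp in *.
  destruct (IVT_gen T (- r) r t Hc) as [s [_ Hs]].
  - split; [eapply Rle_trans; [apply Rmin_l|]|eapply Rle_trans; [|apply Rmax_r]]; lra.
  - exists s. exact Hs.
Qed.

Lemma increasing_inverse (T k : R -> R) m : 0 < m ->
  (forall s, derivable_pt_lim T s (k s)) -> (forall s, m <= k s) -> T 0 = 0 ->
  exists tau : R -> R, tau 0 = 0 /\ (forall t, derivable_pt_lim tau t (/ k (tau t))) /\
    (forall t, 0 < t -> 0 < tau t) /\ (forall M, exists T0, forall t, T0 <= t -> M <= tau t).
Proof.
  intros Hm HT Hk HT0.
  pose proof (growth_of_derive_lower_bound T k m HT Hk) as Hgrow.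
  pose proof (surjective_of_linear_growth T m Hm
    (fun x => derivable_pt_lim_continuity_pt T x (k x) (HT x)) Hgrow) as Hsurj.
  set (tau := fun t => proj1_sig (constructive_indefinite_description _ (Hsurj t))).
  assert (Htau : forall t, T (tau t) = t).
  { intro t. unfold tau. destruct (constructive_indefinite_description _ (Hsurj t)). auto. }
  assert (Hlip : forall x y, x <= y -> 0 <= m * (tau y - tau x) <= y - x).
  { intros x y Hxy. destruct (Rle_dec (tau x) (tau y)).
    - pose proof (Hgrow _ _ r). rewrite !Htau in H. nra.
    - pose proof (Hgrow (tau y) (tau x) ltac:(lra)). rewrite !Htau in H. nra. }
  assert (Hcont : forall t, continuity_pt tau t).
  { intro t. apply continuity_pt_eps. intros eps Heps. exists (eps * m). split; [nra|].
    intros x Hx. destruct (Rle_dec x t).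
    - pose proof (Hlip x t r). rewrite Rabs_left1 in * by nra. nra.
    - pose proof (Hlip t x ltac:(lra)). rewrite Rabs_pos_eq in * by nra. nra. }
  assert (Htau0 : tau 0 = 0).
  { destruct (Rle_dec 0 (tau 0)).
    - pose proof (Hgrow 0 (tau 0) r). rewrite Htau, HT0 in H. nra.
    - pose proof (Hgrow (tau 0) 0 ltac:(lra)). rewrite Htau, HT0 in H. nra. }
  exists tau. repeat split.
  - exact Htau0.
  - intro t.
    assert (Prf : forall a, tau (t - 1) <= a <= tau (t + 1) -> derivable_pt T a)
      by (intros a _; exists (k a); apply HT).
    assert (Hi : tau (t - 1) <= tau t <= tau (t + 1)).
    { pose proof (Hlip (t - 1) t ltac:(lra)). pose proof (Hlip t (t + 1) ltac:(lra)). nra. }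
    pose proof (derivable_pt_lim_recip_interv T tau (t - 1) (t + 1) t Prf (Hcont t)
      ltac:(lra) ltac:(lra) Hi) as Hinv.
    rewrite (derive_pt_eq_0 T (tau t) (k (tau t)) (Prf (tau t) Hi) (HT (tau t))) in Hinv.
    replace (/ k (tau t)) with (1 / k (tau t)) by (field; specialize (Hk (tau t)); lra).
    apply Hinv.
    + intros x _. apply Htau.
    + specialize (Hk (tau t)). lra.
  - intros t Ht. pose proof (Hlip 0 t ltac:(lra)) as [H _]. rewrite Htau0 in H.
    destruct (Req_dec (tau t) 0) as [E|]; [|nra].
    pose proof (Htau t). rewrite E, HT0 in H0. lra.
  - intro M. exists (T M). intros t Ht. apply Rnot_lt_le. intro Hlt.
    pose proof (Hgrow (tau t) M ltac:(lra)). rewrite Htau in H. nra.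
Qed.

(** * Uniqueness for locally Lipschitz systems in R^4 *)

(* Points of R^4 are coded as [nat -> R]; only the coordinates [0..3] matter. *)
Definition vec4 (x0 x1 x2 x3 : R) : nat -> R :=
  fun i => match i with 0 => x0 | 1 => x1 | 2 => x2 | _ => x3 end%nat.

Definition dist4 (x y : nat -> R) : R :=
  Rabs (x 0%nat - y 0%nat) + Rabs (x 1%nat - y 1%nat)
  + Rabs (x 2%nat - y 2%nat) + Rabs (x 3%nat - y 3%nat).

Definition in_box4 (r : R) (x : nat -> R) : Prop :=
  Rabs (x 0%nat) <= r /\ Rabs (x 1%nat) <= r /\ Rabs (x 2%nat) <= r /\ Rabs (x 3%nat) <= r.

Definition locally_lipschitz4 (f : (nat -> R) -> R) : Prop :=
  forall r, exists L, 0 <= L /\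
    forall x y, in_box4 r x -> in_box4 r y -> Rabs (f x - f y) <= L * dist4 x y.

Lemma dist4_nonneg x y : 0 <= dist4 x y.
Proof.
  unfold dist4. pose proof (Rabs_pos (x 0%nat - y 0%nat)). pose proof (Rabs_pos (x 1%nat - y 1%nat)).
  pose proof (Rabs_pos (x 2%nat - y 2%nat)). pose proof (Rabs_pos (x 3%nat - y 3%nat)). lra.
Qed.

Lemma locally_lipschitz4_bounded f : locally_lipschitz4 f ->
  forall r, exists B, forall x, in_box4 r x -> Rabs (f x) <= B.
Proof.
  intros Hf r. destruct (Hf r) as [L [HL Hlip]].
  exists (Rabs (f (fun _ => 0)) + L * (4 * r)). intros x Hx.
  assert (H0 : in_box4 r (fun _ => 0)).
  { destruct Hx as [Hx _]. pose proof (Rabs_pos (x 0%nat)).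
    unfold in_box4. rewrite Rabs_R0. repeat split; lra. }
  specialize (Hlip x _ Hx H0). destruct Hx as (H1 & H2 & H3 & H4).
  assert (dist4 x (fun _ => 0) <= 4 * r) by (unfold dist4; rewrite !Rminus_0_r; lra).
  pose proof (Rabs_triang_inv (f x) (f (fun _ => 0))). nra.
Qed.

Lemma locally_lipschitz4_const c : locally_lipschitz4 (fun _ => c).
Proof.
  intro r. exists 0. split; [lra|]. intros x y _ _.
  rewrite Rminus_diag, Rabs_R0, Rmult_0_l. lra.
Qed.

Lemma locally_lipschitz4_coord i : (i <= 3)%nat -> locally_lipschitz4 (fun x => x i).
Proof.
  intro Hi. intro r. exists 1. split; [lra|]. intros x y _ _. rewrite Rmult_1_l.
  unfold dist4. pose proof (Rabs_pos (x 0%nat - y 0%nat)). pose proof (Rabs_pos (x 1%nat - y 1%nat)).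
  pose proof (Rabs_pos (x 2%nat - y 2%nat)). pose proof (Rabs_pos (x 3%nat - y 3%nat)).
  destruct i as [|[|[|[|i]]]]; try lra. lia.
Qed.

Lemma locally_lipschitz4_plus f g : locally_lipschitz4 f -> locally_lipschitz4 g ->
  locally_lipschitz4 (fun x => f x + g x).
Proof.
  intros Hf Hg r. destruct (Hf r) as [L1 [HL1 H1]], (Hg r) as [L2 [HL2 H2]].
  exists (L1 + L2). split; [lra|]. intros x y Hx Hy.
  specialize (H1 x y Hx Hy). specialize (H2 x y Hx Hy).
  replace (f x + g x - (f y + g y)) with ((f x - f y) + (g x - g y)) by ring.
  pose proof (Rabs_triang (f x - f y) (g x - g y)). lra.
Qed.

Lemma locally_lipschitz4_opp f : locally_lipschitz4 f -> locally_lipschitz4 (fun x => - f x).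
Proof.
  intros Hf r. destruct (Hf r) as [L [HL H]]. exists L. split; [lra|]. intros x y Hx Hy.
  replace (- f x - - f y) with (- (f x - f y)) by ring. rewrite Rabs_Ropp. auto.
Qed.

Lemma locally_lipschitz4_minus f g : locally_lipschitz4 f -> locally_lipschitz4 g ->
  locally_lipschitz4 (fun x => f x - g x).
Proof.
  intros Hf Hg. apply (locally_lipschitz4_plus f (fun x => - g x)); [|apply locally_lipschitz4_opp]; auto.
Qed.

Lemma locally_lipschitz4_mult f g : locally_lipschitz4 f -> locally_lipschitz4 g ->
  locally_lipschitz4 (fun x => f x * g x).
Proof.
  intros Hf Hg r. destruct (Hf r) as [L1 [HL1 H1]], (Hg r) as [L2 [HL2 H2]].
  destruct (locally_lipschitz4_bounded f Hf r) as [B1 HB1].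
  destruct (locally_lipschitz4_bounded g Hg r) as [B2 HB2].
  exists (Rabs B1 * L2 + Rabs B2 * L1). split; [pose proof (Rabs_pos B1); pose proof (Rabs_pos B2); nra|].
  intros x y Hx Hy.
  specialize (H1 x y Hx Hy). specialize (H2 x y Hx Hy).
  specialize (HB1 x Hx). specialize (HB2 y Hy). pose proof (Rle_abs B1). pose proof (Rle_abs B2).
  replace (f x * g x - f y * g y) with (f x * (g x - g y) + g y * (f x - f y)) by ring.
  eapply Rle_trans; [apply Rabs_triang|]. rewrite !Rabs_mult.
  assert (Rabs (f x) * Rabs (g x - g y) <= Rabs B1 * (L2 * dist4 x y))
    by (apply Rmult_le_compat; auto using Rabs_pos; lra).
  assert (Rabs (g y) * Rabs (f x - f y) <= Rabs B2 * (L1 * dist4 x y))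
    by (apply Rmult_le_compat; auto using Rabs_pos; lra).
  lra.
Qed.

Lemma locally_lipschitz4_pow f n : locally_lipschitz4 f -> locally_lipschitz4 (fun x => f x ^ n).
Proof.
  intro Hf. induction n as [|n IH]; simpl.
  - apply locally_lipschitz4_const.
  - apply (locally_lipschitz4_mult f (fun x => f x ^ n)); auto.
Qed.

Ltac locally_lipschitz4_tac :=
  repeat match goal with
  | |- locally_lipschitz4 (fun _ => ?c) => apply (locally_lipschitz4_const c)
  | |- locally_lipschitz4 (fun x => x ?i) => apply locally_lipschitz4_coord; lia
  | |- locally_lipschitz4 (fun x => @?f x + @?g x) => apply (locally_lipschitz4_plus f g)
  | |- locally_lipschitz4 (fun x => @?f x - @?g x) => apply (locally_lipschitz4_minus f g)
  | |- locally_lipschitz4 (fun x => @?f x * @?g x) => apply (locally_lipschitz4_mult f g)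
  | |- locally_lipschitz4 (fun x => - @?f x) => apply (locally_lipschitz4_opp f)
  | |- locally_lipschitz4 (fun x => @?f x ^ ?n) => apply (locally_lipschitz4_pow f n)
  end.

Definition solution4 (F : nat -> (nat -> R) -> R) (x : R -> nat -> R) : Prop :=
  forall i, (i <= 3)%nat -> right_cont0 (fun t => x t i) /\
    forall t, 0 < t -> derivable_pt_lim (fun s => x s i) t (F i (x t)).

Lemma solution4_continuity F x i : solution4 F x -> (i <= 3)%nat ->
  forall t, continuity_pt (ext0 (fun s => x s i)) t.
Proof.
  intros Hx Hi. destruct (Hx i Hi) as [H0 Hd]. apply ext0_continuity_pt; [exact H0|].
  intros t Ht. exact (derivable_pt_lim_continuity_pt _ t _ (Hd t Ht)).
Qed.

Lemma solution4_bounded F x T : solution4 F x -> 0 <= T ->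
  exists r, forall t, 0 <= t <= T -> in_box4 r (x t).
Proof.
  intros Hx HT.
  assert (Hb : forall i, (i <= 3)%nat -> exists r, forall t, 0 <= t <= T -> Rabs (x t i) <= r).
  { intros i Hi.
    destruct (continuity_ab_maj (fun s => Rabs (ext0 (fun s => x s i) s)) 0 T HT) as [M [HM _]].
    - intros s _. apply (continuity_pt_comp (ext0 (fun s => x s i)) Rabs).
      + exact (solution4_continuity F x i Hx Hi s).
      + apply Rcontinuity_abs.
    - exists (Rabs (ext0 (fun s => x s i) M)). intros t Ht.
      specialize (HM t Ht). rewrite ext0_pos in HM by lra. exact HM. }
  destruct (Hb 0%nat ltac:(lia)) as [r0 H0], (Hb 1%nat ltac:(lia)) as [r1 H1],
    (Hb 2%nat ltac:(lia)) as [r2 H2], (Hb 3%nat ltac:(lia)) as [r3 H3].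
  exists (Rmax (Rmax r0 r1) (Rmax r2 r3)). intros t Ht.
  pose proof (Rmax_l r0 r1). pose proof (Rmax_r r0 r1). pose proof (Rmax_l r2 r3).
  pose proof (Rmax_r r2 r3). pose proof (Rmax_l (Rmax r0 r1) (Rmax r2 r3)).
  pose proof (Rmax_r (Rmax r0 r1) (Rmax r2 r3)).
  specialize (H0 t Ht). specialize (H1 t Ht). specialize (H2 t Ht). specialize (H3 t Ht).
  repeat split; lra.
Qed.

Lemma in_box4_Rmax_l r r' x : in_box4 r x -> in_box4 (Rmax r r') x.
Proof. pose proof (Rmax_l r r'). intros (H0 & H1 & H2 & H3). repeat split; lra. Qed.

Lemma in_box4_Rmax_r r r' x : in_box4 r' x -> in_box4 (Rmax r r') x.
Proof. pose proof (Rmax_r r r'). intros (H0 & H1 & H2 & H3). repeat split; lra. Qed.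

Lemma energy_estimate4 L d0 d1 d2 d3 f0 f1 f2 f3 : 0 <= L ->
  let N := Rabs d0 + Rabs d1 + Rabs d2 + Rabs d3 in
  Rabs f0 <= L * N -> Rabs f1 <= L * N -> Rabs f2 <= L * N -> Rabs f3 <= L * N ->
  2 * (d0 * f0 + d1 * f1 + d2 * f2 + d3 * f3) <= 8 * L * (d0 ^ 2 + d1 ^ 2 + d2 ^ 2 + d3 ^ 2).
Proof.
  intros HL N H0 H1 H2 H3.
  assert (Hterm : forall d f, Rabs f <= L * N -> d * f <= Rabs d * (L * N)).
  { intros d f Hf. eapply Rle_trans; [apply Rle_abs|]. rewrite Rabs_mult.
    apply Rmult_le_compat_l; [apply Rabs_pos|exact Hf]. }
  assert (HN : N ^ 2 <= 4 * (d0 ^ 2 + d1 ^ 2 + d2 ^ 2 + d3 ^ 2)).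
  { unfold N. rewrite <- (pow2_abs d0), <- (pow2_abs d1), <- (pow2_abs d2), <- (pow2_abs d3).
    pose proof (pow2_ge_0 (Rabs d0 - Rabs d1)). pose proof (pow2_ge_0 (Rabs d0 - Rabs d2)).
    pose proof (pow2_ge_0 (Rabs d0 - Rabs d3)). pose proof (pow2_ge_0 (Rabs d1 - Rabs d2)).
    pose proof (pow2_ge_0 (Rabs d1 - Rabs d3)). pose proof (pow2_ge_0 (Rabs d2 - Rabs d3)).
    nra. }
  pose proof (Hterm d0 f0 H0). pose proof (Hterm d1 f1 H1).
  pose proof (Hterm d2 f2 H2). pose proof (Hterm d3 f3 H3).
  assert (L * N ^ 2 <= L * (4 * (d0 ^ 2 + d1 ^ 2 + d2 ^ 2 + d3 ^ 2)))
    by (apply Rmult_le_compat_l; assumption).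
  unfold N in *. nra.
Qed.

Lemma solution4_lipschitz_on_interval F x y T :
  (forall i, (i <= 3)%nat -> locally_lipschitz4 (F i)) ->
  solution4 F x -> solution4 F y -> 0 <= T ->
  exists L, 0 <= L /\ forall j s, (j <= 3)%nat -> 0 <= s <= T ->
    Rabs (F j (x s) - F j (y s)) <= L * dist4 (x s) (y s).
Proof.
  intros HF Hx Hy HT.
  destruct (solution4_bounded F x T Hx HT) as [rx Hrx].
  destruct (solution4_bounded F y T Hy HT) as [ry Hry].
  set (r := Rmax rx ry).
  destruct (HF 0%nat ltac:(lia) r) as [L0 [HL0 H0]], (HF 1%nat ltac:(lia) r) as [L1 [HL1 H1]],
    (HF 2%nat ltac:(lia) r) as [L2 [HL2 H2]], (HF 3%nat ltac:(lia) r) as [L3 [HL3 H3]].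
  exists (L0 + L1 + L2 + L3). split; [lra|]. intros j s Hj Hs.
  assert (Hxs : in_box4 r (x s)) by (apply in_box4_Rmax_l, Hrx, Hs).
  assert (Hys : in_box4 r (y s)) by (apply in_box4_Rmax_r, Hry, Hs).
  pose proof (dist4_nonneg (x s) (y s)).
  destruct j as [|[|[|[|j]]]]; [| | | |lia].
  - specialize (H0 _ _ Hxs Hys). nra.
  - specialize (H1 _ _ Hxs Hys). nra.
  - specialize (H2 _ _ Hxs Hys). nra.
  - specialize (H3 _ _ Hxs Hys). nra.
Qed.

(* Gronwall's inequality for the squared distance of two solutions. *)
Lemma solution4_unique F x y :
  (forall i, (i <= 3)%nat -> locally_lipschitz4 (F i)) ->
  solution4 F x -> solution4 F y -> (forall i, (i <= 3)%nat -> x 0 i = y 0 i) ->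
  forall t i, 0 <= t -> (i <= 3)%nat -> x t i = y t i.
Proof.
  intros HF Hx Hy H0 T i HT Hi.
  destruct (Req_dec T 0) as [->|HT0]; [auto|].
  destruct (solution4_lipschitz_on_interval F x y T HF Hx Hy HT) as [L [HL HLip]].
  set (d := fun j s => ext0 (fun s => x s j) s - ext0 (fun s => y s j) s).
  set (e := fun s => d 0%nat s ^ 2 + d 1%nat s ^ 2 + d 2%nat s ^ 2 + d 3%nat s ^ 2).
  set (df := fun j s => F j (x s) - F j (y s)).
  assert (Hd : forall j s, (j <= 3)%nat -> 0 < s -> is_derive (d j) s (df j s)).
  { intros j s Hj Hs. apply (is_derive_minus (ext0 (fun s => x s j)) (ext0 (fun s => y s j)));
      apply is_derive_Reals, ext0_derivable_pt_lim; auto;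
      [apply (proj2 (Hx j Hj))|apply (proj2 (Hy j Hj))]; exact Hs. }
  assert (HeT : e T <= 0).
  { apply (gronwall_zero e (fun s => 2 * (d 0%nat s * df 0%nat s + d 1%nat s * df 1%nat s
      + d 2%nat s * df 2%nat s + d 3%nat s * df 3%nat s)) (8 * L) T); [lra| | |].
    - assert (Hc : forall j, (j <= 3)%nat -> continuity_pt (d j) 0).
      { intros j Hj. apply (continuity_pt_minus (ext0 (fun s => x s j)) (ext0 (fun s => y s j)));
          [exact (solution4_continuity F x j Hx Hj 0)|exact (solution4_continuity F y j Hy Hj 0)]. }
      unfold e. pose proof (Hc 0%nat ltac:(lia)). pose proof (Hc 1%nat ltac:(lia)).
      pose proof (Hc 2%nat ltac:(lia)). pose proof (Hc 3%nat ltac:(lia)).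
      continuity_tac.
    - unfold e, d. rewrite !ext0_pos by lra.
      rewrite !H0 by lia. rewrite !Rminus_diag. ring.
    - intros s Hs. split.
      + apply is_derive_Reals. unfold e.
        pose proof (Hd 0%nat s ltac:(lia) ltac:(lra)). pose proof (Hd 1%nat s ltac:(lia) ltac:(lra)).
        pose proof (Hd 2%nat s ltac:(lia) ltac:(lra)). pose proof (Hd 3%nat s ltac:(lia) ltac:(lra)).
        auto_derive; [repeat split; eexists; eassumption|].
        rewrite !(is_derive_eq_Derive (d _) s _) by eassumption. ring.
      + assert (Hdist : dist4 (x s) (y s)
          = Rabs (d 0%nat s) + Rabs (d 1%nat s) + Rabs (d 2%nat s) + Rabs (d 3%nat s))
          by (unfold d, dist4; rewrite !ext0_pos by lra; reflexivity).
        apply energy_estimate4; [exact HL| | | |]; rewrite <- Hdist; apply HLip; lia || lra. }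
  assert (Hsq : d i T ^ 2 <= 0).
  { unfold e in HeT. pose proof (pow2_ge_0 (d 0%nat T)). pose proof (pow2_ge_0 (d 1%nat T)).
    pose proof (pow2_ge_0 (d 2%nat T)). pose proof (pow2_ge_0 (d 3%nat T)).
    destruct i as [|[|[|[|i]]]]; [lra|lra|lra|lra|lia]. }
  assert (Hdi : d i T = 0) by nra.
  unfold d in Hdi. rewrite !ext0_pos in Hdi by lra. lra.
Qed.

(** * The quartic forms [pp], [qq], [rr] *)

Lemma pp_swap12 x y z : pp x y z = pp y x z.
Proof. unfold pp. ring. Qed.

Lemma pp_swap23 x y z : pp x y z = pp x z y.
Proof. unfold pp. ring. Qed.

Lemma qq_swap23 x y z : qq x y z = qq x z y.
Proof. unfold qq. ring. Qed.

Lemma rr_swap23 x y z : rr x y z = rr x z y.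
Proof. unfold rr. rewrite pp_swap23, qq_swap23. reflexivity. Qed.

Lemma pp_sub_rr x y z : pp x y z - 2 * rr x y z = - 3 * qq x y z.
Proof. unfold rr. field. Qed.

Lemma rr_cycle_sum x y z : rr x y z + rr y x z + rr z x y = 0.
Proof. unfold rr, pp, qq. field. Qed.

Lemma pp_scale k x y z : pp (k * x) (k * y) (k * z) = k ^ 4 * pp x y z.
Proof. unfold pp. ring. Qed.

Lemma qq_scale k x y z : qq (k * x) (k * y) (k * z) = k ^ 4 * qq x y z.
Proof. unfold qq. ring. Qed.

Lemma rr_scale k x y z : rr (k * x) (k * y) (k * z) = k ^ 4 * rr x y z.
Proof. unfold rr. rewrite pp_scale, qq_scale. ring. Qed.

(* [pp] is Schur's quartic form; on a sorted triple it is a polynomial with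
   nonnegative coefficients in the smallest entry and the two gaps. *)
Lemma pp_sorted t d s : pp t (t + d) (t + d + s) =
  t^2*d^2 + t^2*d*s + t^2*s^2 + 4*t*d*s^2 + 2*t*s^3 + 3*d^2*s^2 + 3*d*s^3 + s^4.
Proof. unfold pp. ring. Qed.

Lemma pp_nonneg_sorted x y z : 0 <= x -> x <= y -> y <= z -> 0 <= pp x y z.
Proof.
  intros Hx Hxy Hyz.
  replace (pp x y z) with (pp x (x + (y - x)) (x + (y - x) + (z - y))) by (f_equal; ring).
  rewrite pp_sorted. set (d := y - x). set (s := z - y).
  assert (0 <= d) by (unfold d; lra). assert (0 <= s) by (unfold s; lra).
  repeat apply Rplus_le_le_0_compat; repeat apply Rmult_le_pos; try apply pow_le; lra.
Qed.

Lemma pp_nonneg x y z : 0 <= x -> 0 <= y -> 0 <= z -> 0 <= pp x y z.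
Proof.
  intros Hx Hy Hz.
  destruct (Rle_dec x y), (Rle_dec y z), (Rle_dec x z).
  all: first
    [ apply pp_nonneg_sorted; lra
    | rewrite pp_swap23; apply pp_nonneg_sorted; lra
    | rewrite pp_swap12; apply pp_nonneg_sorted; lra
    | rewrite pp_swap12, pp_swap23; apply pp_nonneg_sorted; lra
    | rewrite pp_swap23, pp_swap12; apply pp_nonneg_sorted; lra
    | rewrite pp_swap23, pp_swap12, pp_swap23; apply pp_nonneg_sorted; lra ].
Qed.

Lemma monomial_bound v w d i j : Rabs v <= d -> Rabs w <= d ->
  - d ^ (i + j) <= v ^ i * w ^ j <= d ^ (i + j).
Proof.
  intros Hv Hw. apply Rabs_le_between. rewrite Rabs_mult, <- !RPow_abs, pow_add.
  apply Rmult_le_compat; try apply pow_le; try apply Rabs_pos; apply pow_incr;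
    split; auto; apply Rabs_pos.
Qed.

Ltac bound_monomials Hv Hw :=
  repeat match goal with
  | |- context [?v ^ ?i * ?w ^ ?j] =>
      lazymatch goal with
      | _ : - _ <= v ^ i * w ^ j <= _ |- _ => fail
      | _ => let H := fresh "Hmon" in
             pose proof (monomial_bound v w _ i j Hv Hw) as H; cbv [Nat.add] in H
      end
  end.

(* The expansion of [rr (1+v) 1 (1+w)^2 + rr (1+w) 1 (1+v)^2 - pp 1 (1+v) (1+w)],
   grouped as [v^2 * LA v w - 71 v w + w^2 * LC v w]: its quadratic part
   [44 v^2 - 71 v w + 44 w^2] is positive definite. *)
Definition LA (v w : R) : R :=
  (44) + (-304)*(v^0*w^1) + (-354)*(v^0*w^2) + (-256)*(v^0*w^3) + (315)*(v^0*w^4)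
  + (270)*(v^0*w^5) + (26)*(v^0*w^6) + (298)*(v^1*w^0) + (-651)*(v^1*w^1)
  + (-256)*(v^1*w^2) + (-792)*(v^1*w^3) + (-244)*(v^1*w^4) + (56)*(v^1*w^5)
  + (829)*(v^2*w^0) + (-964)*(v^2*w^1) + (315)*(v^2*w^2) + (-244)*(v^2*w^3)
  + (-148)*(v^2*w^4) + (1220)*(v^3*w^0) + (-924)*(v^3*w^1) + (270)*(v^3*w^2)
  + (56)*(v^3*w^3) + (1005)*(v^4*w^0) + (-466)*(v^4*w^1) + (26)*(v^4*w^2)
  + (440)*(v^5*w^0) + (-88)*(v^5*w^1) + (80)*(v^6*w^0).
Definition LC (v w : R) : R :=
  (44) + (298)*(v^0*w^1) + (829)*(v^0*w^2) + (1220)*(v^0*w^3) + (1005)*(v^0*w^4)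
  + (440)*(v^0*w^5) + (80)*(v^0*w^6) + (-304)*(v^1*w^0) + (-651)*(v^1*w^1)
  + (-964)*(v^1*w^2) + (-924)*(v^1*w^3) + (-466)*(v^1*w^4) + (-88)*(v^1*w^5).

Lemma pp_le_rr_sqr_near_one v w : Rabs v <= 1/200 -> Rabs w <= 1/200 ->
  pp 1 (1 + v) (1 + w) <= rr (1 + v) 1 (1 + w) ^ 2 + rr (1 + w) 1 (1 + v) ^ 2.
Proof.
  intros Hv Hw.
  assert (HA : 40 <= LA v w) by (unfold LA; bound_monomials Hv Hw; lra).
  assert (HC : 40 <= LC v w) by (unfold LC; bound_monomials Hv Hw; lra).
  assert (E : rr (1 + v) 1 (1 + w) ^ 2 + rr (1 + w) 1 (1 + v) ^ 2 - pp 1 (1 + v) (1 + w)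
    = v^2 * LA v w - 71 * v * w + w^2 * LC v w) by (unfold LA, LC, rr, pp, qq; field).
  pose proof (pow2_ge_0 (v - w)). pose proof (pow2_ge_0 (v + w)).
  assert (v^2 * LA v w >= 40 * v^2) by nra. assert (w^2 * LC v w >= 40 * w^2) by nra.
  nra.
Qed.

Lemma pp_le_rr_sqr_near_diagonal a b c : 0 < a ->
  Rabs (b / a - 1) <= 1/200 -> Rabs (c / a - 1) <= 1/200 ->
  a ^ 4 * pp a b c <= rr b a c ^ 2 + rr c a b ^ 2.
Proof.
  intros Ha Hb Hc.
  pose proof (pp_le_rr_sqr_near_one _ _ Hb Hc) as H.
  replace (1 + (b / a - 1)) with (b / a) in H by ring.
  replace (1 + (c / a - 1)) with (c / a) in H by ring.
  assert (Ep : pp a b c = a ^ 4 * pp 1 (b / a) (c / a))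
    by (rewrite <- pp_scale; f_equal; field; lra).
  assert (Eb : rr b a c = a ^ 4 * rr (b / a) 1 (c / a))
    by (rewrite <- rr_scale; f_equal; field; lra).
  assert (Ec : rr c a b = a ^ 4 * rr (c / a) 1 (b / a))
    by (rewrite <- rr_scale; f_equal; field; lra).
  rewrite Ep, Eb, Ec.
  assert (0 < a ^ 4) by (apply pow_lt; lra).
  replace ((a ^ 4 * rr (b / a) 1 (c / a)) ^ 2 + (a ^ 4 * rr (c / a) 1 (b / a)) ^ 2)
    with (a ^ 4 * (a ^ 4 * (rr (b / a) 1 (c / a) ^ 2 + rr (c / a) 1 (b / a) ^ 2))) by ring.
  apply Rmult_le_compat_l; [lra|]. apply Rmult_le_compat_l; [lra|exact H].
Qed.

Definition S3_field (be : R) (i : nat) (x : nat -> R) : R :=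
  let x0 := x 0%nat in let x1 := x 1%nat in let x2 := x 2%nat in let x3 := x 3%nat in
  match i with
  | O => - be * pp x1 x2 x3 * x0 ^ 3
  | 1%nat => - be * qq x1 x2 x3 * x0 ^ 2 * x1
  | 2%nat => - be * qq x2 x3 x1 * x0 ^ 2 * x2
  | _ => - be * qq x3 x1 x2 * x0 ^ 2 * x3
  end.

Lemma S3_field_locally_lipschitz4 be i : locally_lipschitz4 (S3_field be i).
Proof.
  destruct i as [|[|[|[|i]]]]; cbv zeta beta iota delta [S3_field pp qq];
    locally_lipschitz4_tac.
Qed.

Lemma solution4_of_S3 h0 h1 h2 h3 g0 g1 g2 g3 :
  S3_global_solution h0 h1 h2 h3 g0 g1 g2 g3 ->
  solution4 (S3_field (beta h0 h1 h2 h3)) (fun t => vec4 (g0 t) (g1 t) (g2 t) (g3 t)).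
Proof.
  intros (_ & _ & _ & _ & C0 & C1 & C2 & C3 & Hd) i Hi.
  destruct i as [|[|[|[|i]]]]; [| | | |lia]; split; auto; intros t Ht; apply (Hd t Ht).
Qed.

Lemma S3_global_solution_unique h0 h1 h2 h3 g0 g1 g2 g3 G0 G1 G2 G3 :
  S3_global_solution h0 h1 h2 h3 g0 g1 g2 g3 -> S3_global_solution h0 h1 h2 h3 G0 G1 G2 G3 ->
  forall t, 0 <= t -> g0 t = G0 t /\ g1 t = G1 t /\ g2 t = G2 t /\ g3 t = G3 t.
Proof.
  intros Hg HG t Ht.
  assert (E := solution4_unique _ _ _ (fun i _ => S3_field_locally_lipschitz4 _ i)
    (solution4_of_S3 _ _ _ _ _ _ _ _ Hg) (solution4_of_S3 _ _ _ _ _ _ _ _ HG)).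
  destruct Hg as (a0 & a1 & a2 & a3 & _), HG as (b0 & b1 & b2 & b3 & _).
  assert (H0 : forall i, (i <= 3)%nat -> vec4 (g0 0) (g1 0) (g2 0) (g3 0) i
                                        = vec4 (G0 0) (G1 0) (G2 0) (G3 0) i).
  { intros i _. rewrite a0, a1, a2, a3, b0, b1, b2, b3. reflexivity. }
  exact (conj (E H0 t 0%nat Ht ltac:(lia)) (conj (E H0 t 1%nat Ht ltac:(lia))
    (conj (E H0 t 2%nat Ht ltac:(lia)) (E H0 t 3%nat Ht ltac:(lia))))).
Qed.

(** * Global solutions of (S3) from the planar system *)

(* [tau] is the inverse of [s |-> int_0^s 1/w]. *)
Lemma scalar_autonomous_ode_solution (w : R -> R) W : (forall s, continuity_pt w s) ->
  (forall s, 0 <= s -> 0 < w s <= W) ->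
  exists tau : R -> R, tau 0 = 0 /\ (forall t, continuity_pt tau t) /\
    (forall t, 0 < t -> 0 < tau t /\ derivable_pt_lim tau t (w (tau t))) /\
    (forall M, exists T, forall t, T <= t -> M <= tau t).
Proof.
  intros Hc Hw.
  assert (HW : 0 < W) by (pose proof (Hw 0 (Rle_refl 0)); lra).
  set (v := fun s => / ext0 w s).
  assert (Hwpos : forall s, 0 < ext0 w s) by (intro s; apply Hw, Rmax_l).
  assert (Hv : forall s, / W <= v s).
  { intro s. unfold v. apply Rinv_le_contravar; [apply Hwpos|]. apply Hw, Rmax_l. }
  assert (Hvc : forall s, continuity_pt v s).
  { intro s. unfold v. apply continuity_pt_inv; [|apply Rgt_not_eq, Hwpos].
    apply ext0_continuity_pt; [apply right_cont0_continuity_pt, Hc|intros; apply Hc]. }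
  destruct (increasing_inverse (fun s => RInt v 0 s) v (/ W)) as (tau & H0 & Hd & Hpos & Hinf).
  - apply Rinv_0_lt_compat, HW.
  - intro s. apply is_derive_Reals, is_derive_RInt_0, Hvc.
  - exact Hv.
  - exact (RInt_point (V := R_CompleteNormedModule) 0 v).
  - exists tau. split; [exact H0|split; [|split; [|exact Hinf]]].
    + intro t. exact (derivable_pt_lim_continuity_pt _ t _ (Hd t)).
    + intros t Ht. split; [apply Hpos, Ht|]. specialize (Hd t). unfold v in Hd. rewrite Rinv_inv in Hd.
      rewrite ext0_pos in Hd by (left; apply Hpos, Ht). exact Hd.
Qed.

Section Planar_to_S3.

Variables (D U0 be b0 c0 : R) (b c : R -> R).
Hypotheses (HD : 0 < D) (HU0 : 0 < U0) (Hbe : 0 < be).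
Hypothesis HP : P_global_solution D b0 c0 b c.

Let B := ext0 b.
Let C := ext0 c.
Let A s := D / (B s * C s).

Lemma B_pos (s : R) : 0 < B s.
Proof. destruct HP as (_ & _ & _ & _ & Hpos & _). apply Hpos, Rmax_l. Qed.

Lemma C_pos (s : R) : 0 < C s.
Proof. destruct HP as (_ & _ & _ & _ & Hpos & _). apply Hpos, Rmax_l. Qed.

Lemma A_pos (s : R) : 0 < A s.
Proof.
  pose proof (B_pos s). pose proof (C_pos s).
  apply Rdiv_lt_0_compat; [exact HD|apply Rmult_lt_0_compat; assumption].
Qed.

Lemma B_continuity (s : R) : continuity_pt B s.
Proof.
  destruct HP as (_ & _ & Hb & _ & _ & Hd). apply ext0_continuity_pt; [exact Hb|].
  intros t Ht. exact (derivable_pt_lim_continuity_pt _ t _ (proj1 (Hd t Ht))).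
Qed.

Lemma C_continuity (s : R) : continuity_pt C s.
Proof.
  destruct HP as (_ & _ & _ & Hc & _ & Hd). apply ext0_continuity_pt; [exact Hc|].
  intros t Ht. exact (derivable_pt_lim_continuity_pt _ t _ (proj2 (Hd t Ht))).
Qed.

Lemma B_derive (s : R) : 0 < s -> is_derive B s (- (2/3) * rr (B s) (C s) (A s) * B s).
Proof.
  intro Hs. destruct HP as (_ & _ & _ & _ & _ & Hd). apply is_derive_Reals.
  unfold A, B, C. rewrite !ext0_pos, rr_swap23 by lra.
  apply ext0_derivable_pt_lim, (proj1 (Hd s Hs)); exact Hs.
Qed.

Lemma C_derive (s : R) : 0 < s -> is_derive C s (- (2/3) * rr (C s) (A s) (B s) * C s).
Proof.
  intro Hs. destruct HP as (_ & _ & _ & _ & _ & Hd). apply is_derive_Reals.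
  unfold A, B, C. rewrite !ext0_pos by lra.
  apply ext0_derivable_pt_lim, (proj2 (Hd s Hs)); exact Hs.
Qed.

(* [A'/A = - B'/B - C'/C], which has the same form as the other two equations
   because [rr A B C + rr B C A + rr C A B = 0]. *)
Lemma A_derive (s : R) : 0 < s -> is_derive A s (- (2/3) * rr (A s) (B s) (C s) * A s).
Proof.
  intro Hs. pose proof (B_derive s Hs) as Hb. pose proof (C_derive s Hs) as Hc.
  pose proof (B_pos s). pose proof (C_pos s).
  unfold A. auto_derive.
  - repeat split; try (eexists; eassumption). apply Rgt_not_eq, Rmult_lt_0_compat; lra.
  - rewrite (is_derive_eq_Derive B s _ Hb), (is_derive_eq_Derive C s _ Hc).
    pose proof (rr_cycle_sum (D / (B s * C s)) (B s) (C s)) as Hsum.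
    rewrite (rr_swap23 (B s)) in Hsum.
    replace (rr (D / (B s * C s)) (B s) (C s))
      with (- rr (B s) (C s) (D / (B s * C s)) - rr (C s) (D / (B s * C s)) (B s)) by lra.
    unfold A. field. lra.
Qed.

Let p s := pp (A s) (B s) (C s).

Lemma p_continuity (s : R) : continuity_pt p s.
Proof.
  pose proof B_continuity. pose proof C_continuity.
  assert (forall s, B s * C s <> 0)
    by (intro t; apply Rgt_not_eq, Rmult_lt_0_compat; [apply B_pos|apply C_pos]).
  unfold p, A, pp. continuity_tac; auto.
Qed.

Lemma p_nonneg (s : R) : 0 <= p s.
Proof. apply pp_nonneg; left; [apply A_pos|apply B_pos|apply C_pos]. Qed.

Lemma p_derive (s : R) : 0 < s -> is_derive p s
  (- (2/9) * (rr (A s) (B s) (C s) ^ 2 + rr (B s) (C s) (A s) ^ 2 + rr (C s) (A s) (B s) ^ 2)).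
Proof.
  intro Hs.
  pose proof (A_derive s Hs) as Ha. pose proof (B_derive s Hs) as Hb. pose proof (C_derive s Hs) as Hc.
  unfold p, pp. auto_derive; [repeat split; try (eexists; eassumption)|].
  rewrite (is_derive_eq_Derive A s _ Ha), (is_derive_eq_Derive B s _ Hb),
    (is_derive_eq_Derive C s _ Hc).
  unfold rr, pp, qq. field.
Qed.

Let Ip s := RInt p 0 s.

Lemma Ip_derive (s : R) : is_derive Ip s (p s).
Proof. apply is_derive_RInt_0, p_continuity. Qed.

Lemma Ip_0 : Ip 0 = 0.
Proof. exact (RInt_point (V := R_CompleteNormedModule) 0 p). Qed.

Lemma Ip_nondecreasing x y : x <= y -> Ip x <= Ip y.
Proof.
  intro Hxy. cut (- Ip y <= - Ip x); [lra|].
  apply (nonincreasing_of_derive (fun s => - Ip s) (fun s => - p s) x y Hxy).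
  - intros t _. apply is_derive_Reals, (is_derive_opp Ip), Ip_derive.
  - intros t _. pose proof (p_nonneg t). lra.
Qed.

(* [u] is [g_00^(1/3)] along the S3 solution, as a function of the planar time. *)
Let u s := U0 * exp (- Ip s / 3).

Lemma u_pos (s : R) : 0 < u s.
Proof. apply Rmult_lt_0_compat; [exact HU0|apply exp_pos]. Qed.

Lemma u_le (s : R) : 0 <= s -> u s <= U0.
Proof.
  intro Hs. pose proof (Ip_nondecreasing 0 s Hs) as HI. rewrite Ip_0 in HI.
  assert (exp (- Ip s / 3) <= 1).
  { rewrite <- exp_0. destruct (Req_dec (Ip s) 0) as [->|]; [right; f_equal; lra|].
    left. apply exp_increasing. lra. }
  unfold u. nra.
Qed.

Lemma u_derive (s : R) : is_derive u s (u s * (- p s / 3)).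
Proof.
  pose proof (Ip_derive s) as HI. unfold u. auto_derive; [exists (p s); exact HI|].
  rewrite (is_derive_eq_Derive Ip s _ HI). unfold Rdiv. ring.
Qed.

Lemma u_continuity (s : R) : continuity_pt u s.
Proof. exact (derivable_pt_lim_continuity_pt u s _ (proj1 (is_derive_Reals _ _ _) (u_derive s))). Qed.

Lemma exists_time_change : exists tau : R -> R, tau 0 = 0 /\ (forall t, continuity_pt tau t) /\
  (forall t, 0 < t -> 0 < tau t /\ derivable_pt_lim tau t (be * u (tau t) ^ 2)) /\
  (forall M, exists T, forall t, T <= t -> M <= tau t).
Proof.
  apply (scalar_autonomous_ode_solution (fun s => be * u s ^ 2) (be * U0 ^ 2)).
  - intro s. pose proof u_continuity. continuity_tac.
  - intros s Hs. pose proof (u_pos s). pose proof (u_le s Hs). split.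
    + apply Rmult_lt_0_compat; [exact Hbe|apply pow_lt; lra].
    + apply Rmult_le_compat_l; [lra|]. apply pow_incr. lra.
Qed.

Variable tau : R -> R.
Hypotheses (Htau0 : tau 0 = 0) (Htau_continuity : forall t, continuity_pt tau t)
  (Htau : forall t, 0 < t -> 0 < tau t /\ derivable_pt_lim tau t (be * u (tau t) ^ 2)).

Lemma time_changed_derive (F : R -> R) (dF t : R) : 0 < t -> is_derive F (tau t) dF ->
  derivable_pt_lim (fun t => F (tau t)) t (be * u (tau t) ^ 2 * dF).
Proof.
  intros Ht HF. apply is_derive_Reals.
  exact (is_derive_comp F tau t dF _ HF (proj2 (is_derive_Reals _ _ _) (proj2 (Htau t Ht)))).
Qed.

Lemma rescaled_coordinate_derive (X Y Z : R -> R) (t : R) : 0 < t ->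
  (forall s, 0 < s -> is_derive X s (- (2/3) * rr (X s) (Y s) (Z s) * X s)) ->
  (forall s, pp (X s) (Y s) (Z s) = p s) ->
  let x s := X (tau s) / u (tau s) in let y s := Y (tau s) / u (tau s) in
  let z s := Z (tau s) / u (tau s) in
  derivable_pt_lim x t (- be * qq (x t) (y t) (z t) * (u (tau t) ^ 3) ^ 2 * x t).
Proof.
  intros Ht HX Hp x y z. destruct (Htau t Ht) as [Hs _]. set (s := tau t) in *.
  pose proof (HX s Hs) as Hd. pose proof (u_derive s) as Hu. pose proof (u_pos s).
  assert (HF : is_derive (fun s => X s / u s) s (- qq (X s) (Y s) (Z s) * (X s / u s))).
  { auto_derive; [repeat split; try (eexists; eassumption); lra|].
    rewrite (is_derive_eq_Derive X s _ Hd), (is_derive_eq_Derive u s _ Hu), <- (Hp s).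
    replace (qq (X s) (Y s) (Z s)) with (- (pp (X s) (Y s) (Z s) - 2 * rr (X s) (Y s) (Z s)) / 3)
      by (rewrite pp_sub_rr; field).
    field. lra. }
  pose proof (time_changed_derive _ _ t Ht HF) as Hres. fold s in Hres.
  unfold x, y, z. fold s.
  replace (- be * qq (X s / u s) (Y s / u s) (Z s / u s) * (u s ^ 3) ^ 2 * (X s / u s))
    with (be * u s ^ 2 * (- qq (X s) (Y s) (Z s) * (X s / u s))); [exact Hres|].
  replace (X s / u s) with (/ u s * X s) by (unfold Rdiv; ring).
  replace (Y s / u s) with (/ u s * Y s) by (unfold Rdiv; ring).
  replace (Z s / u s) with (/ u s * Z s) by (unfold Rdiv; ring).
  rewrite qq_scale. field. lra.
Qed.

Lemma rescaled_u_derive (t : R) : 0 < t ->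
  derivable_pt_lim (fun t => u (tau t) ^ 3) t
    (- be * pp (A (tau t) / u (tau t)) (B (tau t) / u (tau t)) (C (tau t) / u (tau t))
       * (u (tau t) ^ 3) ^ 3).
Proof.
  intro Ht. set (s := tau t). pose proof (u_pos s). pose proof (u_derive s) as Hu.
  assert (HF : is_derive (fun s => u s ^ 3) s (- p s * u s ^ 3)).
  { auto_derive; [eexists; eassumption|]. rewrite (is_derive_eq_Derive u s _ Hu). field. }
  pose proof (time_changed_derive _ _ t Ht HF) as Hres. fold s in Hres.
  replace (A s / u s) with (/ u s * A s) by (unfold Rdiv; ring).
  replace (B s / u s) with (/ u s * B s) by (unfold Rdiv; ring).
  replace (C s / u s) with (/ u s * C s) by (unfold Rdiv; ring).
  rewrite pp_scale. replace (- be * ((/ u s) ^ 4 * pp (A s) (B s) (C s)) * (u s ^ 3) ^ 3)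
    with (be * u s ^ 2 * (- p s * u s ^ 3)) by (unfold p; field; lra).
  exact Hres.
Qed.

Lemma S3_global_solution_of_planar h0 h1 h2 h3 :
  be = beta h0 h1 h2 h3 -> U0 ^ 3 = h0 -> D / (b0 * c0) / U0 = h1 ->
  b0 / U0 = h2 -> c0 / U0 = h3 ->
  S3_global_solution h0 h1 h2 h3 (fun t => u (tau t) ^ 3) (fun t => A (tau t) / u (tau t))
    (fun t => B (tau t) / u (tau t)) (fun t => C (tau t) / u (tau t)).
Proof.
  intros Hbe_def E0 E1 E2 E3.
  destruct HP as (Hb0 & Hc0 & _).
  assert (Hu0 : u (tau 0) = U0).
  { rewrite Htau0. unfold u. rewrite Ip_0. replace (- 0 / 3) with 0 by field. rewrite exp_0. ring. }
  assert (HB0 : B (tau 0) = b0) by (rewrite Htau0; unfold B; rewrite ext0_pos; lra).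
  assert (HC0 : C (tau 0) = c0) by (rewrite Htau0; unfold C; rewrite ext0_pos; lra).
  assert (Hc : forall F, (forall s, continuity_pt F s) -> right_cont0 (fun t => F (tau t))).
  { intros F HF. apply right_cont0_continuity_pt, (continuity_pt_comp tau F); auto. }
  assert (HBC : forall s, B s * C s <> 0)
    by (intro s; apply Rgt_not_eq, Rmult_lt_0_compat; [apply B_pos|apply C_pos]).
  assert (Hun : forall s, u s <> 0) by (intro s; apply Rgt_not_eq, u_pos).
  pose proof u_continuity. pose proof B_continuity. pose proof C_continuity.
  unfold S3_global_solution. rewrite <- Hbe_def.
  repeat split.
  - rewrite Hu0. exact E0.
  - unfold A. rewrite HB0, HC0, Hu0. exact E1.
  - rewrite HB0, Hu0. exact E2.
  - rewrite HC0, Hu0. exact E3.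
  - apply (Hc (fun s => u s ^ 3)). intro s. continuity_tac.
  - apply (Hc (fun s => A s / u s)). intro s. unfold A. continuity_tac; auto.
  - apply (Hc (fun s => B s / u s)). intro s. continuity_tac; auto.
  - apply (Hc (fun s => C s / u s)). intro s. continuity_tac; auto.
  - apply rescaled_u_derive. assumption.
  - apply (rescaled_coordinate_derive A B C); [assumption|apply A_derive|reflexivity].
  - apply (rescaled_coordinate_derive B C A); [assumption|apply B_derive|].
    intro s. unfold p, pp. ring.
  - apply (rescaled_coordinate_derive C A B); [assumption|apply C_derive|].
    intro s. unfold p, pp. ring.
Qed.

Variable dd : R.
Hypotheses (Hdd : 0 < dd) (Hdd3 : dd ^ 3 = D)
  (Hb_lim : conv_infty b dd) (Hc_lim : conv_infty c dd).

Lemma B_lim : conv_infty B dd.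
Proof.
  apply (conv_infty_agree_on_nonneg b); [|exact Hb_lim].
  intros t Ht. symmetry. apply ext0_pos, Ht.
Qed.

Lemma C_lim : conv_infty C dd.
Proof.
  apply (conv_infty_agree_on_nonneg c); [|exact Hc_lim].
  intros t Ht. symmetry. apply ext0_pos, Ht.
Qed.

Lemma A_lim : conv_infty A dd.
Proof.
  replace dd with (D / (dd * dd)) by (rewrite <- Hdd3; field; lra).
  apply (conv_infty_div (fun _ => D) (fun s => B s * C s)).
  - apply Rgt_not_eq, Rmult_lt_0_compat; lra.
  - apply conv_infty_const.
  - apply conv_infty_mult; [apply B_lim|apply C_lim].
Qed.

Lemma eventually_near_diagonal : exists s0, 0 < s0 /\ forall s, s0 <= s ->
  Rabs (B s / A s - 1) <= 1/200 /\ Rabs (C s / A s - 1) <= 1/200 /\ dd / 2 <= A s.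
Proof.
  assert (Hratio : forall X, conv_infty X dd -> conv_infty (fun s => X s / A s) 1).
  { intros X HX. replace 1 with (dd / dd) by (field; lra).
    apply conv_infty_div; [lra|exact HX|apply A_lim]. }
  destruct (Hratio B B_lim (1/200) ltac:(lra)) as [T1 HT1].
  destruct (Hratio C C_lim (1/200) ltac:(lra)) as [T2 HT2].
  destruct (A_lim (dd/2) ltac:(lra)) as [T3 HT3].
  exists (Rmax 1 (Rmax T1 (Rmax T2 T3))).
  pose proof (Rmax_l 1 (Rmax T1 (Rmax T2 T3))). pose proof (Rmax_r 1 (Rmax T1 (Rmax T2 T3))).
  pose proof (Rmax_l T1 (Rmax T2 T3)). pose proof (Rmax_r T1 (Rmax T2 T3)).
  pose proof (Rmax_l T2 T3). pose proof (Rmax_r T2 T3).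
  split; [lra|]. intros s Hs. repeat split.
  - left. apply HT1. lra.
  - left. apply HT2. lra.
  - assert (Habs : Rabs (A s - dd) < dd / 2) by (apply HT3; lra).
    apply Rabs_def2 in Habs. lra.
Qed.

(* Near the diagonal, [p] is dominated by the dissipation of the Lyapunov
   function [pp], so [Ip] stays bounded. *)
Lemma Ip_bounded : exists M, forall s, 0 <= s -> Ip s <= M.
Proof.
  destruct eventually_near_diagonal as [s0 [Hs0 Hnear]].
  set (k := 72 / dd ^ 4).
  assert (Hdd4 : 0 < dd ^ 4) by (apply pow_lt, Hdd).
  set (Psi := fun s => Ip s + k * p s).
  assert (Hdec : forall s, s0 <= s -> Psi s <= Psi s0).
  { intros s Hs.
    apply (nonincreasing_of_derive Psi (fun s => p s + k * (- (2/9) * (rr (A s) (B s) (C s) ^ 2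
      + rr (B s) (C s) (A s) ^ 2 + rr (C s) (A s) (B s) ^ 2)))); [exact Hs| |].
    - intros t Ht. apply is_derive_Reals, (is_derive_plus Ip (fun s => k * p s)).
      + apply Ip_derive.
      + apply (is_derive_scal p), p_derive. lra.
    - intros t Ht. destruct (Hnear t ltac:(lra)) as (Hb & Hc & Ha).
      pose proof (pp_le_rr_sqr_near_diagonal (A t) (B t) (C t) (A_pos t) Hb Hc) as Hpp.
      rewrite (rr_swap23 (B t)) in Hpp. fold (p t) in Hpp.
      assert (Ha4 : dd ^ 4 / 16 <= A t ^ 4)
        by (replace (dd ^ 4 / 16) with ((dd / 2) ^ 4) by field; apply pow_incr; lra).
      pose proof (p_nonneg t). pose proof (pow2_ge_0 (rr (A t) (B t) (C t))).
      assert (Hk : k * (2/9) * (dd ^ 4 / 16) = 1) by (unfold k; field; lra).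
      assert (dd ^ 4 / 16 * p t <= rr (B t) (C t) (A t) ^ 2 + rr (C t) (A t) (B t) ^ 2)
        by (eapply Rle_trans; [apply Rmult_le_compat_r; [lra|exact Ha4]|exact Hpp]).
      nra. }
  exists (Psi s0). intros s Hs. pose proof (p_nonneg s). pose proof (p_nonneg s0).
  assert (0 < k) by (unfold k; apply Rdiv_lt_0_compat; lra).
  destruct (Rle_dec s s0).
  - pose proof (Ip_nondecreasing s s0 r). unfold Psi. nra.
  - pose proof (Hdec s ltac:(lra)). unfold Psi in *. nra.
Qed.

Lemma u_lim : exists uL, 0 < uL /\ conv_infty u uL.
Proof.
  destruct Ip_bounded as [M HM].
  destruct (conv_infty_nondecreasing Ip M (fun x y H => Ip_nondecreasing x y (proj2 H)) HM)
    as [IL HIL].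
  exists (U0 * exp (- IL / 3)). split; [apply Rmult_lt_0_compat; [lra|apply exp_pos]|].
  apply (conv_infty_continuous Ip IL (fun x => U0 * exp (- x / 3)) HIL).
  apply (derivable_pt_lim_continuity_pt _ IL (U0 * exp (- IL / 3) * (- 1 / 3))).
  apply is_derive_Reals. auto_derive; [exact Logic.I|unfold Rdiv; ring].
Qed.

Hypothesis Htau_unbounded : forall M, exists T, forall t, T <= t -> M <= tau t.

Lemma rescaled_lim :
  (exists L, 0 < L /\ conv_infty (fun t => u (tau t) ^ 3) L) /\
  (exists m, 0 < m /\ conv_infty (fun t => A (tau t) / u (tau t)) m /\
     conv_infty (fun t => B (tau t) / u (tau t)) m /\
     conv_infty (fun t => C (tau t) / u (tau t)) m).
Proof.
  destruct u_lim as [uL [HuL Hu]].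
  assert (Hut : conv_infty (fun t => u (tau t)) uL) by (apply conv_infty_comp; auto).
  split.
  - exists (uL ^ 3). split; [apply pow_lt, HuL|]. apply conv_infty_pow, Hut.
  - exists (dd / uL). split; [apply Rdiv_lt_0_compat; assumption|].
    repeat split; apply conv_infty_div; try lra; try exact Hut;
      apply conv_infty_comp; auto; [apply A_lim|apply B_lim|apply C_lim].
Qed.

End Planar_to_S3.

Theorem theorem5p22 (h0 h1 h2 h3 : R) :
  0 < h0 -> 0 < h1 -> 0 < h2 -> 0 < h3 ->
  h1 <= h2 -> h2 <= h3 ->
  in_DL0 h0 h1 h2 h3 ->
  (exists g0 g1 g2 g3 : R -> R, S3_global_solution h0 h1 h2 h3 g0 g1 g2 g3) /\
  (forall g0 g1 g2 g3 : R -> R, S3_global_solution h0 h1 h2 h3 g0 g1 g2 g3 ->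
     (exists L, 0 < L /\ conv_infty g0 L) /\
     (exists m, 0 < m /\ conv_infty g1 m /\ conv_infty g2 m /\ conv_infty g3 m)).
Proof.
  intros Q0 Q1 Q2 Q3 _ _ [b [c [HP [Hb Hc]]]].
  set (D := detH h0 h1 h2 h3) in *. set (U0 := Rpower h0 (1/3)) in *.
  assert (HD : 0 < D) by (unfold D, detH; repeat apply Rmult_lt_0_compat; assumption).
  assert (HU0 : 0 < U0) by apply exp_pos.
  assert (HU03 : U0 ^ 3 = h0) by apply Rpower_third_cube, Q0.
  assert (Hbe : 0 < beta h0 h1 h2 h3)
    by (apply Rdiv_lt_0_compat; [lra|apply Rmult_lt_0_compat; [lra|apply pow_lt, HD]]).
  destruct (exists_time_change D U0 _ _ _ b c HD HU0 Hbe HP)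
    as (tau & Htau0 & Htau_cont & Htau & Htau_inf).
  pose proof (S3_global_solution_of_planar D U0 _ _ _ b c HU0 HP tau Htau0 Htau_cont Htau
    h0 h1 h2 h3 eq_refl HU03) as HG.
  specialize (HG ltac:(unfold D, detH; rewrite <- HU03; field; lra) ltac:(field; lra) ltac:(field; lra)).
  split; [eexists _, _, _, _; exact HG|].
  intros g0 g1 g2 g3 Hg.
  pose proof (S3_global_solution_unique _ _ _ _ _ _ _ _ _ _ _ _ HG Hg) as Heq.
  destruct (rescaled_lim D U0 _ _ b c HD HU0 HP tau
    (Rpower D (1/3)) (exp_pos _) (Rpower_third_cube D HD) Hb Hc Htau_inf)
    as [[L [HL HL0]] [m [Hm [Hm1 [Hm2 Hm3]]]]].
  split; [exists L|exists m]; repeat split; try assumption.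
  - apply (conv_infty_agree_on_nonneg _ _ _ (fun t Ht => proj1 (Heq t Ht)) HL0).
  - apply (conv_infty_agree_on_nonneg _ _ _ (fun t Ht => proj1 (proj2 (Heq t Ht))) Hm1).
  - apply (conv_infty_agree_on_nonneg _ _ _ (fun t Ht => proj1 (proj2 (proj2 (Heq t Ht)))) Hm2).
  - apply (conv_infty_agree_on_nonneg _ _ _ (fun t Ht => proj2 (proj2 (proj2 (Heq t Ht)))) Hm3).
Qed.
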